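(* Let $G=(V,E)$ be a finite simple graph of order $n$. For each collection $\mathcal{F}$ of pairwise disjoint forts of $G$, there is a feasible solution $(x,z)$ of the Fort Number Model $\mathrm{FN}(G)$ such that $|\mathcal{F}|=\sum_{i=1}^n z_i$.
   Context: $N(u)$ denotes the neighborhood of $u$. A fort of $G$ is a non-empty set $F\subseteq V$ such that no vertex $u\in V\setminus F$ has exactly one neighbor in $F$. The Fort Number Model $\mathrm{FN}(G)$ has binary variables $x_{iv}$ ($i\in\{1,\dots,n\}$, $v\in V$) and $z_i$ ($i\in\{1,\dots,n\}$), with constraints: $z_i-\sum_{u\in V}x_{iu}\leq0$ for all $i$; $x_{iu}-x_{iv}+\sum_{w\in N(u)\setminus\{v\}}x_{iw}\geq0$ for all $i$, all $v\in V$ and all $u\in N(v)$; $\sum_{i=1}^n x_{iu}\leq1$ for all $u\in V$. A feasible solution is one satisfying all constraints. *)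

From mathcomp Require Import all_boot all_order all_algebra.
Set Implicit Arguments. Unset Strict Implicit. Unset Printing Implicit Defensive.
Import GRing.Theory Num.Theory.

Definition simple_graph (T : finType) (e : rel T) : Prop :=
  symmetric e /\ irreflexive e.

Definition nbhd (T : finType) (e : rel T) (u : T) : {set T} := [set w | e u w].

Definition is_fort (T : finType) (e : rel T) (F : {set T}) : Prop :=
  F != set0 /\ forall u, u \notin F -> #|nbhd e u :&: F| != 1%N.

(* Feasibility for the Fort Number Model FN(G), with binary variables
   x_{i v} (i in 'I_n, standing for 1..n) and z_i, where n = #|T|.
   Constraints are read in the integers. *)
Definition fn_feasible (T : finType) (e : rel T)
    (x : 'I_#|T| -> T -> bool) (z : 'I_#|T| -> bool) : Prop :=
  [/\ (forall i : 'I_#|T|, (z i)%:Z - \sum_(u : T) (x i u)%:Z <= 0)%R,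
      (forall (i : 'I_#|T|) (v u : T), e v u ->
         (0 <= (x i u)%:Z - (x i v)%:Z
               + \sum_(w in nbhd e u :\ v) (x i w)%:Z)%R)
    & (forall u : T, (\sum_(i < #|T|) (x i u)%:Z <= 1)%R)].

(** Number the forts of the family F_1, ..., F_k (k <= n because disjoint
   nonempty sets fit into V), and let x_i be the indicator of F_i and z_i = 1
   for i <= k, all other variables being 0.  Then z_i <= sum_u x_iu as forts
   are nonempty, sum_i x_iu <= 1 by disjointness, and the neighbourhood
   constraint is the fort condition: if v is in F_i but u is not, then u has
   at least two neighbours in F_i, so one besides v. *)

From mathcomp Require Import all_boot all_order all_algebra.
Import GRing.Theory Num.Theory.

Lemma sumz_nat (I : finType) (P : pred I) (f : I -> nat) :
  (\sum_(i | P i) (f i)%:Z)%R = (\sum_(i | P i) f i)%N.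
Proof. by rewrite (big_morph Posz PoszD (erefl (Posz 0))). Qed.

Lemma sum_nat_bool (I : finType) (P Q : pred I) :
  \sum_(i | P i) Q i = #|[set i | P i && Q i]|.
Proof.
by rewrite -sum1dep_card big_mkcondr; apply: eq_bigr => i _; case: (Q i).
Qed.

Lemma sum_ord_lt (n k : nat) : k <= n -> \sum_(i < n) (i < k) = k.
Proof.
move=> le_kn; rewrite -big_mkcondr /= -(big_ord_widen _ (fun=> 1%N) le_kn).
by rewrite sum1_card card_ord.
Qed.

Lemma card_trivIset_nonempty (T : finType) (P : {set {set T}}) :
  trivIset P -> set0 \notin P -> #|P| <= #|T|.
Proof.
move=> /eqP tiP P0; apply: leq_trans (max_card (cover P)).
rewrite -tiP -sum1_card; apply: leq_sum => A PA.
by rewrite card_gt0; apply: contraNneq P0 => <-.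
Qed.

Section FortNeighbourhood.

Set Implicit Arguments.
Unset Strict Implicit.

Variables (T : finType) (e : rel T).
Hypothesis e_sym : symmetric e.

Definition fort_closed (F : {set T}) : Prop :=
  forall w, w \notin F -> #|nbhd e w :&: F| != 1.

Lemma fort_other_neighbour (F : {set T}) (v u : T) :
  fort_closed F -> e v u -> v \in F -> u \notin F ->
  0 < #|(nbhd e u :\ v) :&: F|.
Proof.
move=> fortF evu vF uF.
have vNF : v \in nbhd e u :&: F by rewrite !inE e_sym evu.
have := fortF u uF; rewrite (cardsD1 v) vNF -setIDAC.
by case: #|_|.
Qed.

Lemma fort_nbhd_constraint (F : {set T}) (v u : T) :
  fort_closed F -> e v u ->
  (0 <= (u \in F)%:Z - (v \in F)%:Z
        + \sum_(w in nbhd e u :\ v) (w \in F)%:Z)%R.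
Proof.
move=> fortF evu; rewrite sumz_nat sum_nat_bool -/(setI _ F).
case uF: (u \in F); case vF: (v \in F) => //=.
by have := fort_other_neighbour fortF evu vF (negbT uF); case: #|_|.
Qed.

End FortNeighbourhood.

Section FortPacking.

Set Implicit Arguments.
Unset Strict Implicit.

Variables (T : finType) (e : rel T) (s : seq {set T}).
Hypotheses (e_sym : symmetric e) (s_uniq : uniq s)
  (s_forts : forall F, F \in s -> is_fort e F)
  (s_disj : {in s &, forall A B : {set T}, A != B -> [disjoint A & B]}).

Definition fort_x (i : 'I_#|T|) (u : T) : bool := u \in nth set0 s i.
Definition fort_z (i : 'I_#|T|) : bool := i < size s.

Lemma mem_nth_size (i : nat) (u : T) : u \in nth set0 s i -> i < size s.
Proof. by rewrite ltnNge; apply: contraTN => /(nth_default set0) ->; rewrite inE. Qed.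

(* Past the end of [s], the default [set0] is closed but not a fort. *)
Lemma nth_fort_closed (i : nat) : fort_closed e (nth set0 s i).
Proof.
move=> w.
have [lti | gei] := ltnP i (size s); last by rewrite nth_default // setI0 cards0.
by have [_] := s_forts (mem_nth set0 lti); apply.
Qed.

Lemma mem_nth_inj (i j : nat) (u : T) :
  u \in nth set0 s i -> u \in nth set0 s j -> i = j.
Proof.
move=> ui uj; have lti := mem_nth_size ui; have ltj := mem_nth_size uj.
apply/eqP; apply: contraLR uj => neij.
have neF : nth set0 s i != nth set0 s j by rewrite nth_uniq.
by rewrite (disjointFr (s_disj (mem_nth set0 lti) (mem_nth set0 ltj) neF) ui).
Qed.

Lemma fort_packing_feasible : fn_feasible e fort_x fort_z.
Proof.
split=> [i | i v u evu | u].
- rewrite subr_le0 sumz_nat lez_nat sum_nat_bool /fort_z.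
  case: ltnP => // lti; have [/set0Pn[w wF] _] := s_forts (mem_nth set0 lti).
  by rewrite card_gt0; apply/set0Pn; exists w; rewrite inE.
- exact: (fort_nbhd_constraint e_sym (@nth_fort_closed i) evu).
- rewrite sumz_nat lez_nat sum_nat_bool; apply/card_le1_eqP => i j.
  by rewrite !inE => ui uj; apply: val_inj; exact: mem_nth_inj uj ui.
Qed.

End FortPacking.

Theorem theorem7p2 (T : finType) (e : rel T) (Hg : simple_graph e)
    (FF : {set {set T}})
    (Hforts : forall F, F \in FF -> is_fort e F)
    (Hdisj : forall F1 F2, F1 \in FF -> F2 \in FF -> F1 != F2 ->
               [disjoint F1 & F2]) :
  exists (x : 'I_#|T| -> T -> bool) (z : 'I_#|T| -> bool),
    fn_feasible e x z /\ #|FF| = (\sum_(i < #|T|) z i)%N.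
Proof.
have [e_sym _] := Hg.
have FF_forts F : F \in enum FF -> is_fort e F by rewrite mem_enum; apply: Hforts.
have FF_disj : {in enum FF &, forall A B : {set T}, A != B -> [disjoint A & B]}.
  by move=> A B; rewrite !mem_enum; apply: Hdisj.
have FF_le : #|FF| <= #|T|.
  apply: card_trivIset_nonempty; first by apply/trivIsetP.
  by apply/negP => /Hforts[/eqP].
exists (fort_x (enum FF)), (fort_z (enum FF)); split.
  exact: fort_packing_feasible e_sym (enum_uniq _) FF_forts FF_disj.
by rewrite /fort_z sum_ord_lt -cardE.
Qed.
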